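(* Let $G$ be a connected graph with at least 3 vertices. Then: (a) for every automorphism $\alpha$ of $G$, $|\alpha|_t=|\alpha|+|\alpha|_e$; (b) $\theta''(G)\le \theta(G)+\theta'(G)-1$; (c) $\theta''(G)\le |V(G)|+|E(G)|-1$, with equality when $G\cong K_{1,n}$ for $n\ge 2$.
   Context: All graphs are finite and simple. For an automorphism $\alpha$ (acting on edges by $\alpha(uv)=\alpha(u)\alpha(v)$): - $|\alpha|$ is the number of cycles, including fixed points, of $\alpha$ on $V(G)$; - $|\alpha|_e$ is the number of cycles of $\alpha$ on $E(G)$; - $|\alpha|_t$ is the number of cycles of $\alpha$ acting on $V(G)\cup E(G)$. A vertex, edge, or total coloring with $k$ colors is a surjective map from $V(G)$, $E(G)$, or $V(G)\cup E(G)$ respectively onto $\{1,\dots,k\}$. It is distinguishing if only the identity automorphism preserves all colors. $\theta(G)$, $\theta'(G)$, $\theta''(G)$ denote the least $k$ such that every vertex, edge, or total coloring, respectively, using exactly $k$ colors is distinguishing. *)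

(* Simple graphs: a symmetric irreflexive relation e on a finType T. *)
From mathcomp Require Import all_boot all_fingroup.
Set Implicit Arguments. Unset Strict Implicit. Unset Printing Implicit Defensive.

Section Graphs.
Variables (T : finType) (e : rel T).

Definition is_aut (s : {perm T}) : bool :=
  [forall x, forall y, e (s x) (s y) == e x y].

Definition is_edge : pred {set T} :=
  fun A => [exists x, exists y, e x y && (A == [set x; y])].

Definition edge := {A : {set T} | is_edge A}.

(* induced action of a permutation on edges: uv |-> s(u)s(v)
   (the default branch is never used for automorphisms) *)
Definition edge_map (s : {perm T}) (a : edge) : edge :=
  insubd a (s @: val a).

Definition tot_map (s : {perm T}) (z : T + edge) : T + edge :=
  match z with inl x => inl (s x) | inr a => inr (edge_map s a) end.

Definition vert_map (s : {perm T}) (x : T) : T := s x.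

(* number of cycles (including fixed points) of a map f on a finite type *)
Definition ncycles (X : finType) (f : X -> X) : nat := fcard f predT.

Definition cyc_v (s : {perm T}) := ncycles (vert_map s).
Definition cyc_e (s : {perm T}) := ncycles (edge_map s).
Definition cyc_t (s : {perm T}) := ncycles (tot_map s).

(* A coloring f : X -> {colors} with exactly k colors (surjective) is
   distinguishing if only the identity automorphism preserves all colors,
   where m s is the action of s on X. *)
Definition surj_col (X : finType) (k : nat) (f : {ffun X -> 'I_k}) : bool :=
  [forall c, [exists x, f x == c]].

Definition distinguishing (X : finType) (m : {perm T} -> X -> X) (k : nat)
  (f : {ffun X -> 'I_k}) : bool :=
  [forall s : {perm T}, (is_aut s && [forall a, f (m s a) == f a]) ==> (s == 1%g)].

Definition theta_prop (X : finType) (m : {perm T} -> X -> X) (k : nat) : bool :=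
  (0 < k) && [forall f : {ffun X -> 'I_k}, surj_col f ==> distinguishing m f].

Lemma theta_prop_ex (X : finType) (m : {perm T} -> X -> X) :
  exists k, theta_prop m k.
Proof.
exists #|X|.+1; apply/andP; split=> //; apply/forallP=> f; apply/implyP=> /forallP sf.
exfalso.
have g_ex : forall c : 'I_#|X|.+1, {x | f x == c}.
  by move=> c; apply: sigW; apply/existsP; exact: sf.
pose g c := sval (g_ex c).
have ginj : injective g.
  move=> c1 c2 eq12; have := svalP (g_ex c1); have := svalP (g_ex c2).
  by rewrite /g in eq12; rewrite eq12 => /eqP -> /eqP.
by have := leq_card g ginj; rewrite card_ord ltnn.
Qed.

Definition theta_gen (X : finType) (m : {perm T} -> X -> X) : nat :=
  ex_minn (theta_prop_ex m).

Definition theta_v := theta_gen vert_map.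
Definition theta_e := theta_gen edge_map.
Definition theta_t := theta_gen tot_map.

Definition is_star : Prop :=
  exists c, forall x y, e x y = (x != y) && ((x == c) || (y == c)).

End Graphs.

From mathcomp Require Import all_boot all_fingroup zify.
Set Implicit Arguments. Unset Strict Implicit. Unset Printing Implicit Defensive.

(** An automorphism acts on V(G) and on E(G) separately, so its cycles on the
   disjoint union V(G) + E(G) are those on V(G) together with those on E(G).
   Every total coloring with k colors restricts to a vertex coloring and an edge
   coloring whose numbers of colors add up to at least k, so with
   theta + theta' - 1 colors one of the two restrictions already uses enough
   colors to be distinguishing.  In a connected graph on at least three vertices
   a nontrivial automorphism moves some vertex and some edge; a total coloring
   it preserves must then repeat a color twice, hence uses at most
   |V| + |E| - 2 colors.  Conversely, for the star K_{1,n} the transposition of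
   two leaves swaps one pair of vertices and one pair of edges and fixes
   everything else, so coloring each element by its orbit gives a
   non-distinguishing total coloring with |V| + |E| - 2 colors. *)

Lemma imset_set2 (aT rT : finType) (f : aT -> rT) (x y : aT) :
  f @: [set x; y] = [set f x; f y].
Proof. by rewrite imsetU1 imset_set1. Qed.

Lemma exists_notin (T : finType) (A : {set T}) : #|A| < #|T| -> exists w, w \notin A.
Proof.
move=> ltAT; have /card_gt0P[w] : 0 < #|~: A| by have := cardsC A; lia.
by rewrite inE; exists w.
Qed.

Lemma cardsTD2 (X : finType) (p q : X) : p != q -> #|[set: X] :\ p :\ q| = #|X| - 2.
Proof.
move=> pq; have := cardsD1 p [set: X]; have := cardsD1 q ([set: X] :\ p).
by rewrite !inE eq_sym pq cardsT; lia.
Qed.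

Lemma n_comp_embed (X Y : finType) (h : X -> X) (k : Y -> Y) (i : Y -> X) (a : {pred X}) :
  injective h -> injective k -> injective i -> closed (frel h) a -> a =i codom i ->
  (forall y, h (i y) = i (k y)) -> n_comp (frel h) a = ncycles k.
Proof.
move=> h_inj k_inj i_inj cl_a a_codom hi.
rewrite /ncycles (@adjunction_n_comp _ _ i _ (frel k) (fconnect_sym h_inj)
                    (fconnect_sym k_inj) _ cl_a).
  by apply: eq_n_comp_r => y; rewrite !inE a_codom codom_f.
apply: strict_adjunction => //; first exact: fconnect_sym.
  by apply/subsetP => x; rewrite a_codom.
by move=> y y' _ /=; rewrite hi (inj_eq i_inj).
Qed.

Lemma ncycles_sum (A B : finType) (f : A -> A) (g : B -> B) (h : A + B -> A + B) :
  injective f -> injective g ->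
  (forall x, h (inl x) = inl (f x)) -> (forall y, h (inr y) = inr (g y)) ->
  ncycles h = ncycles f + ncycles g.
Proof.
move=> f_inj g_inj h_inl h_inr.
have h_inj : injective h.
  case=> [x|y] [x'|y']; rewrite ?h_inl ?h_inr => // -[].
    by move/f_inj->.
  by move/g_inj->.
pose is_inl := [pred z : A + B | if z is inl _ then true else false].
have cl_inl : closed (frel h) is_inl.
  by case=> [x|y] [x'|y'] /eqP; rewrite ?h_inl ?h_inr.
rewrite /ncycles (n_compC is_inl); congr (_ + _); apply: n_comp_embed => //;
  try exact: predC_closed.
- by move=> x y [].
- by case=> [x|y]; rewrite !inE ?codom_f //; apply/esym/codomP => -[].
- by move=> x y [].
- by case=> [x|y]; rewrite !inE ?codom_f //; apply/esym/codomP => -[].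
Qed.

Section Edges.
Variables (T : finType) (e : rel T).

Lemma is_autE s : is_aut e s -> forall x y, e (s x) (s y) = e x y.
Proof. by move=> /forallP s_aut x y; apply/eqP; have /forallP := s_aut x; apply. Qed.

Lemma is_edge_set2 x y : e x y -> is_edge e [set x; y].
Proof. by move=> exy; apply/existsP; exists x; apply/existsP; exists y; rewrite exy eqxx. Qed.

Definition edge_of x y (exy : e x y) : edge e := Sub [set x; y] (is_edge_set2 exy).

Lemma edgeP (a : edge e) : exists x y, e x y /\ val a = [set x; y].
Proof. by case: a => A /= /existsP[x /existsP[y /andP[exy /eqP->]]]; exists x, y. Qed.

Lemma edge_mapE s (a : edge e) : is_aut e s -> val (edge_map s a) = s @: val a.
Proof.
move=> s_aut; rewrite /edge_map insubdK //.
have [x [y [exy ->]]] := edgeP a.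
by rewrite imset_set2; apply: is_edge_set2; rewrite is_autE.
Qed.

Lemma edge_map_inj s : is_aut e s -> injective (edge_map (e := e) s).
Proof.
move=> s_aut a b eq_ab; apply/val_inj/(imset_inj (@perm_inj _ s)).
by rewrite -!edge_mapE // eq_ab.
Qed.

Lemma tot_map_inj s : is_aut e s -> injective (tot_map (e := e) s).
Proof.
move=> s_aut [x|a] [y|b] //= [].
  by move/perm_inj->.
by move/(edge_map_inj s_aut)->.
Qed.

Lemma ncycles_tot_map s : is_aut e s -> cyc_t e s = cyc_v s + cyc_e e s.
Proof. by move=> s_aut; apply: ncycles_sum => //; [exact: perm_inj | exact: edge_map_inj]. Qed.

Lemma tot_map_involutive s : is_aut e s -> involutive s -> involutive (tot_map (e := e) s).
Proof.
move=> s_aut s_inv [x|a] /=; first by rewrite s_inv.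
congr inr; apply: val_inj.
by rewrite !edge_mapE // -imset_comp (eq_imset _ s_inv) imset_id.
Qed.

Lemma fixed_edge_swap s x y (exy : e x y) :
  is_aut e s -> edge_map s (edge_of exy) = edge_of exy -> s x != x -> s x = y.
Proof.
move=> s_aut fixed sx; have : s x \in val (edge_of exy).
  by rewrite -fixed edge_mapE // imset_f // !inE eqxx.
by rewrite !inE (negbTE sx) => /eqP.
Qed.

Section Connected.
Hypotheses (e_sym : symmetric e) (e_conn : forall x y : T, connect e x y).

Lemma connected_edge_out (A : {set T}) x y : x \in A -> y \notin A ->
  exists u v, [/\ u \in A, v \notin A & e u v].
Proof.
move=> xA yA.
suff /existsP[u /existsP[v /and3P[uA vA euv]]] :
    [exists u, exists v, [&& u \in A, v \notin A & e u v]] by exists u, v.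
apply: contraNT yA => /existsPn no_out.
suff cl_A : closed e A by rewrite -(closed_connect cl_A (e_conn x y)).
apply: (intro_closed (sym_connect_sym e_sym)) => u v euv uA.
by apply: contraTT (no_out u) => vA; rewrite negbK; apply/existsP; exists v; rewrite uA vA euv.
Qed.

Lemma aut_fixing_edges_eq1 s : 2 < #|T| -> is_aut e s ->
  (forall a : edge e, edge_map s a = a) -> s = 1%g.
Proof.
(* A moved vertex x is swapped with each neighbour z, since the edge xz is
   fixed; then no edge leaving {x, z} can be fixed. *)
move=> hT s_aut s_fix; apply/permP => x; rewrite perm1; apply/eqP/negPn/negP => sx.
have [y yx] : exists y, y \notin [set x] by apply: exists_notin; rewrite cards1; lia.
have [_ [z [/set1P -> zx exz]]] := connected_edge_out (set11 x) yx.
have {}zx : z != x by apply: contraNneq zx => ->; exact: set11.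
have sxz : s x = z := fixed_edge_swap s_aut (s_fix (edge_of exz)) sx.
have sz : s z != z.
  by apply: contra_neq zx => szz; apply: (@perm_inj _ s); rewrite szz sxz.
have ezx : e z x by rewrite e_sym.
have szx : s z = x := fixed_edge_swap s_aut (s_fix (edge_of ezx)) sz.
have [w wxz] : exists w, w \notin [set x; z].
  by apply: exists_notin; rewrite cards2 eq_sym zx.
have [u [v [uxz vxz euv]]] := connected_edge_out (setU11 x [set z]) wxz.
have su : s u != u by case/set2P: uxz => ->; rewrite ?sxz ?szx // eq_sym.
have su_xz : s u \in [set x; z] by case/set2P: uxz => ->; rewrite ?sxz ?szx !inE eqxx ?orbT.
by move: vxz; rewrite -(fixed_edge_swap s_aut (s_fix (edge_of euv)) su) su_xz.
Qed.

End Connected.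
End Edges.

Lemma surj_col_card (X : finType) k (f : {ffun X -> 'I_k}) : surj_col f -> #|f @: setT| = k.
Proof.
move=> /forallP f_surj; suff -> : f @: setT = setT by rewrite cardsT card_ord.
by apply/setP => c; rewrite inE; have /existsP[x /eqP <-] := f_surj c; rewrite imset_f.
Qed.

Lemma coarsen_surj_col (X C : finType) (g : X -> C) k : 0 < k -> k <= #|g @: setT| ->
  exists f : {ffun X -> 'I_k}, surj_col f /\ forall x y, g x = g y -> f x = f y.
Proof.
(* Number the values of g; those beyond the last color are merged into it. *)
case: k => // k _ le_k_img; pose s := enum (g @: setT).
exists [ffun x => inord (minn (index (g x) s) k)]; split; last first.
  by move=> x y gxy; rewrite !ffunE gxy.
apply/forallP => c; apply/existsP.
have c_lt : c < size s by rewrite -cardE; exact: leq_trans (ltn_ord c) le_k_img.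
have /card_gt0P[_ /imsetP[x0 _ _]] : 0 < #|g @: setT| by apply: leq_trans le_k_img.
have : nth (g x0) s c \in g @: setT by rewrite -mem_enum mem_nth.
case/imsetP => x _ gx; exists x.
rewrite ffunE -gx index_uniq ?enum_uniq // (minn_idPl _) ?inord_val //.
by rewrite -ltnS.
Qed.

Section Theta.
Variables (T : finType) (e : rel T) (X : finType) (m : {perm T} -> X -> X).

Lemma theta_genP : theta_prop e m (theta_gen e m).
Proof. by rewrite /theta_gen; case: ex_minnP. Qed.

Lemma theta_gen_gt0 : 0 < theta_gen e m.
Proof. by case/andP: theta_genP. Qed.

Lemma theta_gen_le k : 0 < k ->
  (forall f : {ffun X -> 'I_k}, surj_col f ->
     forall s, is_aut e s -> (forall x, f (m s x) = f x) -> s = 1%g) ->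
  theta_gen e m <= k.
Proof.
move=> k_gt0 k_dist; rewrite /theta_gen; case: ex_minnP => n _; apply.
rewrite /theta_prop k_gt0; apply/forallP => f; apply/implyP => f_surj.
apply/forallP => s; apply/implyP => /andP[s_aut /forallP f_inv].
by apply/eqP/(k_dist f f_surj s s_aut) => x; apply/eqP.
Qed.

Lemma theta_gen_distinguishing (C : finType) (g : X -> C) s :
  theta_gen e m <= #|g @: setT| -> is_aut e s -> (forall x, g (m s x) = g x) -> s = 1%g.
Proof.
move=> le_theta s_aut g_inv.
have [f [f_surj f_g]] := coarsen_surj_col theta_gen_gt0 le_theta.
have /andP[_ /forallP/(_ f)] := theta_genP; rewrite f_surj => /forallP/(_ s).
rewrite s_aut /= => /implyP s_eq1; apply/eqP/s_eq1/forallP => x.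
by rewrite (f_g _ x).
Qed.

End Theta.

Lemma theta_t_le_theta_v_e (T : finType) (e : rel T) :
  theta_t e <= theta_v e + theta_e e - 1.
Proof.
have tv_gt0 : 0 < theta_v e := theta_gen_gt0 _ _.
have te_gt0 : 0 < theta_e e := theta_gen_gt0 _ _.
apply: theta_gen_le => [|f f_surj s s_aut f_inv]; first lia.
pose fv x := f (inl x); pose fe a := f (inr a).
have cover : f @: setT \subset fv @: setT :|: fe @: setT.
  apply/subsetP => _ /imsetP[[x|a] _ ->]; apply/setUP; [left | right].
    exact: (imset_f fv).
  exact: (imset_f fe).
have := leq_trans (subset_leq_card cover) (leq_card_setU _ _).1.
rewrite surj_col_card //; case: (leqP (theta_v e) #|fv @: setT|) => [le_v _ | lt_v le_k].
  by apply: (theta_gen_distinguishing le_v s_aut) => x; apply: (f_inv (inl x)).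
apply: (theta_gen_distinguishing (m := @edge_map T e) (g := fe)) s_aut _ => [|a].
  by rewrite -/(theta_e e); lia.
exact: (f_inv (inr a)).
Qed.

Lemma card_imset_le_two_collisions (X C : finType) (f : X -> C) (p q p' q' : X) :
  p != q -> p' \notin [set p; q] -> q' \notin [set p; q] -> f p = f p' -> f q = f q' ->
  #|f @: setT| <= #|X| - 2.
Proof.
move=> pq; rewrite !inE !negb_or => /andP[p'p p'q] /andP[q'p q'q] fp fq.
rewrite -(cardsTD2 pq); apply: leq_trans (leq_imset_card f _); apply: subset_leq_card.
apply/subsetP => _ /imsetP[z _ ->].
have [-> | zp] := eqVneq z p; first by rewrite fp imset_f // !inE p'p p'q.
have [-> | zq] := eqVneq z q; first by rewrite fq imset_f // !inE q'p q'q.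
by rewrite imset_f // !inE zp zq.
Qed.

Lemma theta_t_le_card (T : finType) (e : rel T) :
  symmetric e -> (forall x y : T, connect e x y) -> 2 < #|T| ->
  theta_t e <= #|T| + #|{: edge e}| - 1.
Proof.
move=> e_sym e_conn hT.
apply: theta_gen_le => [|f f_surj s s_aut f_inv]; first lia.
have [// | s_neq1] := eqVneq s 1%g; exfalso.
have [x sx] : exists x, s x != x.
  apply/existsP; apply: contraNT s_neq1 => /existsPn s_fix.
  by apply/eqP/permP => x; rewrite perm1; apply/eqP/negbNE.
have [a sa] : exists a : edge e, edge_map s a != a.
  apply/existsP; apply: contraNT s_neq1 => /existsPn s_fix.
  by apply/eqP/(aut_fixing_edges_eq1 e_sym e_conn hT s_aut) => a; apply/eqP/negbNE.
have := @card_imset_le_two_collisions _ _ f (inl (s x)) (inr (edge_map s a)) (inl x) (inr a).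
rewrite !inE -!sum_eqE /= orbF (eq_sym x) sx (eq_sym a) sa surj_col_card // card_sum.
move=> /(_ isT isT isT (f_inv (inl x)) (f_inv (inr a))); move: hT.
by set nT := #|T|; set nE := #|{: edge e}|; lia.
Qed.

Lemma involution_invariant_coloring (X : finType) (sigma : X -> X) (D : {set X}) :
  involutive sigma -> {in D, forall z, sigma z \in D -> sigma z = z} ->
  exists2 g : X -> {set X}, (forall z, g (sigma z) = g z) & #|D| <= #|g @: setT|.
Proof.
move=> sigmaK D_fix; exists (fun z => [set z; sigma z]) => [z | ].
  by rewrite sigmaK setUC.
rewrite -(@card_in_imset _ _ (fun z => [set z; sigma z]) D).
  exact/subset_leq_card/imsetS/subsetT.
move=> z z' zD z'D /setP/(_ z); rewrite !inE eqxx /= => /esym/orP[/eqP // | /eqP z_z'].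
by rewrite z_z' D_fix // -z_z'.
Qed.

Section Star.
Variables (T : finType) (e : rel T) (c l1 l2 : T).
Hypothesis star_e : forall x y, e x y = (x != y) && ((x == c) || (y == c)).
Hypotheses (l1c : l1 != c) (l2c : l2 != c) (l12 : l1 != l2).

Local Notation sigma := (tperm l1 l2).

Lemma star_edgeP (b : edge e) : exists2 w, w != c & val b = [set c; w].
Proof.
have [u [v [euv ->]]] := edgeP b; move: euv; rewrite star_e => /andP[uv].
case/orP=> /eqP uc.
  by exists v; [rewrite -uc eq_sym | rewrite uc].
by exists u; [rewrite -uc | rewrite uc setUC].
Qed.

Lemma tperm_star_center : sigma c = c.
Proof. by rewrite tpermD // eq_sym. Qed.

Lemma tperm_star_aut : is_aut e sigma.
Proof.
apply/forallP => x; apply/forallP => y; rewrite !star_e (inj_eq perm_inj).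
by rewrite -{1}tperm_star_center -{2}tperm_star_center !(inj_eq perm_inj).
Qed.

Lemma star_center_l1 : e c l1.
Proof. by rewrite star_e eqxx eq_sym l1c. Qed.

Let a2 := edge_map sigma (edge_of star_center_l1).

Lemma val_a2 : val a2 = [set c; l2].
Proof. by rewrite edge_mapE ?tperm_star_aut // imset_set2 tperm_star_center tpermL. Qed.

Lemma tperm_star_fixed :
  {in [set: T + edge e] :\ inl l2 :\ inr a2, forall z,
     tot_map sigma z \in [set: T + edge e] :\ inl l2 :\ inr a2 -> tot_map sigma z = z}.
Proof.
case=> [x | b]; rewrite !inE -!sum_eqE /= !andbT => z_D sz_D.
  by congr inl; move: z_D sz_D; case: tpermP => // ->; rewrite eqxx.
have [w wc val_b] := star_edgeP b.
have val_sb : val (edge_map sigma b) = [set c; sigma w].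
  by rewrite edge_mapE ?tperm_star_aut // val_b imset_set2 tperm_star_center.
suff sw : sigma w = w by congr inr; apply: val_inj; rewrite val_sb val_b sw.
move: z_D sz_D; rewrite -!(inj_eq val_inj) val_sb val_b val_a2.
by case: tpermP => // ->; rewrite eqxx.
Qed.

Lemma theta_t_star_gt : #|T| + #|{: edge e}| - 2 < theta_t e.
Proof.
have [g g_inv card_g] := involution_invariant_coloring
  (tot_map_involutive tperm_star_aut (tpermK l1 l2)) tperm_star_fixed.
rewrite cardsTD2 // card_sum in card_g.
rewrite ltnNge; apply/negP => le_theta.
have /permP/(_ l1) := theta_gen_distinguishing (leq_trans le_theta card_g) tperm_star_aut g_inv.
by rewrite perm1 tpermL => /eqP; rewrite eq_sym (negbTE l12).
Qed.

End Star.

Lemma theta_t_star (T : finType) (e : rel T) :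
  is_star e -> 2 < #|T| -> #|T| + #|{: edge e}| - 2 < theta_t e.
Proof.
case=> c star_e hT.
have [l1 l1c] : exists l1, l1 \notin [set c] by apply: exists_notin; rewrite cards1; lia.
have [l2 l2c1] : exists l2, l2 \notin [set c; l1].
  by apply: exists_notin; apply: leq_ltn_trans hT; rewrite cards2; case: (c != l1).
move: l1c l2c1; rewrite !inE negb_or => l1c /andP[l2c l21].
by apply: theta_t_star_gt star_e l1c l2c _; rewrite eq_sym.
Qed.

Theorem mainTheorem8 (T : finType) (e : rel T)
  (e_sym : symmetric e) (e_irr : irreflexive e)
  (e_conn : forall x y : T, connect e x y)
  (hT : 3 <= #|T|) :
  (forall s : {perm T}, is_aut e s -> cyc_t e s = cyc_v s + cyc_e e s)
  /\ theta_t e <= theta_v e + theta_e e - 1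
  /\ theta_t e <= #|T| + #|{: edge e}| - 1
  /\ (is_star e -> theta_t e = #|T| + #|{: edge e}| - 1).
Proof.
have le_card := theta_t_le_card e_sym e_conn hT.
split; first exact: ncycles_tot_map.
split; first exact: theta_t_le_theta_v_e.
split=> // e_star.
by have := theta_t_star e_star hT; lia.
Qed.
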